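(* Let $\mathcal{S}$ be a finite set of points of interest, and for each history $X=(s_1,\dots,s_t)$ let $P(\cdot\mid X)$ be a probability distribution on $\mathcal{S}$. For an action (recommendation) $a\in\mathcal{S}$ and parameter $\theta\ge1$ define \[ P(s\mid X,a,\theta)=\begin{cases}P(s\mid X)^{1/\theta}, & s=a,\\ P(s\mid X)/z(\theta), & s\ne a,\end{cases}\qquad z(\theta)=\frac{\sum_{s\neq a}P(s\mid X)}{1-P(s=a\mid X)^{1/\theta}}. \] Then for all $\theta,\theta'\ge1$, all histories $X$ and all $a$, \[ \|P(\cdot\mid X,a,\theta)-P(\cdot\mid X,a,\theta')\|_1\le\frac{2}{e}|\theta-\theta'|. \] *)

From mathcomp Require Import all_boot all_order all_algebra.
From mathcomp Require Import all_classical all_reals all_analysis.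
Set Implicit Arguments. Unset Strict Implicit. Unset Printing Implicit Defensive.
Import Order.TTheory GRing.Theory Num.Theory.
Local Open Scope ring_scope.

Definition is_distr (R : realType) (S : finType) (p : S -> R) : Prop :=
  (forall s, 0 <= p s) /\ \sum_(s : S) p s = 1.

Definition zfac (R : realType) (S : finType) (p : S -> R) (a : S) (theta : R) : R :=
  (\sum_(s : S | s != a) p s) / (1 - p a `^ theta^-1).

Definition Pmod (R : realType) (S : finType) (p : S -> R) (a : S) (theta : R) (s : S) : R :=
  if s == a then p s `^ theta^-1 else p s / zfac p a theta.

Definition l1dist (R : realType) (S : finType) (f g : S -> R) : R :=
  \sum_(s : S) `|f s - g s|.

From mathcomp Require Import all_boot all_order all_algebra.
From mathcomp Require Import all_classical all_reals all_analysis.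
From mathcomp Require Import ring lra.
Set Implicit Arguments. Unset Strict Implicit. Unset Printing Implicit Defensive.
Import Order.TTheory GRing.Theory Num.Theory.
Local Open Scope ring_scope.

(** Only the recommended point [a] is reweighted; the other points are
    rescaled by a common factor so that the total mass stays 1.  Hence the
    l1 distance is twice the change [|q^(1/t) - q^(1/t')|] of the mass of [a],
    where [q = P(a | X)].  Writing [q^(1/t) = exp (-L / t)] with [L = - ln q],
    the derivative in [t] is [(1/t) (L/t) exp (-L/t) <= 1/e] for [t >= 1],
    since [u exp (-u) <= 1/e].  To avoid derivatives, for [t' <= t] write the
    gap as [exp (-L/t) (1 - exp (-d))] with [d = (L/t) (t - t') / t'] and use
    [1 - exp (-d) <= d]. *)

Section ExpLipschitz.
Variable R : realType.

Lemma mul_expRN_le (x : R) : x * expR (- x) <= (expR 1)^-1.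
Proof.
have x_le : x <= expR x / expR 1.
  by have := expR_ge1Dx (x - 1); rewrite expRD expRN addrC subrK.
by rewrite expRN ler_pdivrMr ?expR_gt0 // mulrC.
Qed.

Lemma expR_Ndiv_subr_le (L t t' : R) : 0 <= L -> 1 <= t' -> t' <= t ->
  0 <= expR (- (L / t)) - expR (- (L / t')) <= (t - t') / expR 1.
Proof.
move=> L_ge0 t'_ge1 t'_le_t.
have [t_gt0 t'_gt0] : 0 < t /\ 0 < t' by split; lra.
set u := L / t; set d := L / t' - u.
have dE : d = u * ((t - t') / t').
  by rewrite /d /u; field; apply/andP; split; lra.
have d_ge0 : 0 <= d by rewrite dE mulr_ge0 ?divr_ge0 //; lra.
have -> : expR (- (L / t')) = expR (- u) * expR (- d).
  by rewrite -expRD; congr expR; rewrite /d; lra.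
rewrite -[X in X - _]mulr1 -mulrBr; apply/andP; split.
  by rewrite mulr_ge0 ?expR_ge0 // subr_ge0 -expR0 ler_expR; lra.
have expRNd_ge : 1 - d <= expR (- d) by have := expR_ge1Dx (- d); lra.
apply: (@le_trans _ _ (expR (- u) * d)).
  by rewrite ler_wpM2l ?expR_ge0 //; lra.
rewrite dE mulrA (mulrC (expR _)).
apply: (le_trans (ler_wpM2r _ (mul_expRN_le u))); first by rewrite divr_ge0; lra.
rewrite mulrC ler_wpM2r ?invr_ge0 ?expR_ge0 // ler_pdivrMr //; nra.
Qed.

Lemma expR_Ndiv_lipschitz (L t t' : R) : 0 <= L -> 1 <= t -> 1 <= t' ->
  `|expR (- (L / t)) - expR (- (L / t'))| <= `|t - t'| / expR 1.
Proof.
move=> L_ge0 t_ge1 t'_ge1.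
have [t'_le_t|t_lt_t'] := leP t' t.
  have /andP[gap_ge0 gap_le] := expR_Ndiv_subr_le L_ge0 t'_ge1 t'_le_t.
  by rewrite !ger0_norm // subr_ge0.
have /andP[gap_ge0 gap_le] := expR_Ndiv_subr_le L_ge0 t_ge1 (ltW t_lt_t').
by rewrite distrC [`|t - t'|]distrC !ger0_norm // subr_ge0 ltW.
Qed.

Lemma powR_inv_lipschitz (q t t' : R) : 0 <= q <= 1 -> 1 <= t -> 1 <= t' ->
  `|q `^ t^-1 - q `^ t'^-1| <= `|t - t'| / expR 1.
Proof.
move=> /andP[q_ge0 q_le1] t_ge1 t'_ge1.
have [->|q_neq0] := eqVneq q 0.
  rewrite !powR0 ?invr_eq0 ?gt_eqF ?subrr ?normr0 ?divr_ge0 ?expR_ge0 //; lra.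
have powRE x : q `^ x^-1 = expR (- (- ln q / x)).
  by rewrite /powR (negbTE q_neq0) mulNr opprK mulrC.
by rewrite !powRE expR_Ndiv_lipschitz // oppr_ge0 ln_le0.
Qed.

End ExpLipschitz.

Section Reweighting.
Variables (R : realType) (S : finType) (p : S -> R) (a : S).
Hypothesis p_distr : is_distr p.

Lemma distr_sum_neq : \sum_(s | s != a) p s = 1 - p a.
Proof.
by case: p_distr => _; rewrite (bigD1 a) //= => <-; rewrite addrC addrK.
Qed.

Lemma distr_bounds : 0 <= p a <= 1.
Proof.
case: p_distr => p_ge0 _; rewrite p_ge0 -subr_ge0 -distr_sum_neq.
exact: sumr_ge0.
Qed.

Lemma Pmod_eq (theta : R) : Pmod p a theta a = p a `^ theta^-1.
Proof. by rewrite /Pmod eqxx. Qed.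

Lemma Pmod_neq (theta : R) (s : S) : s != a ->
  Pmod p a theta s = p s * ((1 - p a `^ theta^-1) / (1 - p a)).
Proof.
by move=> s_neq_a; rewrite /Pmod (negbTE s_neq_a) /zfac distr_sum_neq invf_div.
Qed.

Lemma l1dist_Pmod_le (theta theta' : R) :
  l1dist (Pmod p a theta) (Pmod p a theta')
    <= 2 * `|p a `^ theta^-1 - p a `^ theta'^-1|.
Proof.
set f := fun x : R => p a `^ x^-1.
set c := fun x : R => (1 - f x) / (1 - p a).
have [p_ge0 _] := p_distr.
have /andP[_ pa_le1] := distr_bounds.
rewrite /l1dist (bigD1 a) //= !Pmod_eq -/(f theta) -/(f theta').
have -> : \sum_(s | s != a) `|Pmod p a theta s - Pmod p a theta' s|
        = (1 - p a) * `|c theta - c theta'|.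
  rewrite -distr_sum_neq mulr_suml; apply: eq_bigr => s s_neq_a.
  by rewrite !Pmod_neq // -mulrBr normrM ger0_norm.
suff : (1 - p a) * `|c theta - c theta'| <= `|f theta - f theta'| by lra.
have [->|pa_neq1] := eqVneq (1 - p a) 0; first by rewrite mul0r.
rewrite -[X in X * _]ger0_norm ?subr_ge0 // -normrM mulrBr.
by rewrite !(mulrC (1 - p a)) !divfK // opprB addrC addrA subrK distrC.
Qed.

End Reweighting.

Theorem lemma5 (R : realType) (S : finType) (P : seq S -> S -> R)
  (HP : forall X : seq S, is_distr (P X)) :
  forall (theta theta' : R) (X : seq S) (a : S),
    1 <= theta -> 1 <= theta' ->
    l1dist (Pmod (P X) a theta) (Pmod (P X) a theta')
      <= 2 / expR 1 * `|theta - theta'|.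
Proof.
move=> theta theta' X a theta_ge1 theta'_ge1.
apply: le_trans (l1dist_Pmod_le a (HP X) theta theta') _.
rewrite mulrAC -mulrA ler_pM2l //.
exact: powR_inv_lipschitz (distr_bounds a (HP X)) theta_ge1 theta'_ge1.
Qed.
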